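(* Let $p\geq 1$ and let $\gamma=(1\,2\,\cdots\,p)\in S_p$ be the full cycle $\gamma(i)=i+1 \pmod p$. For every noncrossing partition $\pi\in NC(p)$, identified with its geodesic permutation (defined in the context), one has $$1+\mathrm{e}(\pi)=\#(\pi\gamma),$$ where $\mathrm{e}(\pi)$ is the number of blocks of $\pi$ of even cardinality and $\#(\sigma)$ denotes the number of cycles of a permutation $\sigma$.
   Context: $NC(p)$ denotes the set of noncrossing partitions of $\{1,\dots,p\}$. A noncrossing partition $\pi$ is identified with the permutation of $\{1,\dots,p\}$ whose cycles are the blocks of $\pi$, each block $\{i_1<i_2<\dots<i_k\}$ being the cycle $i_1\mapsto i_2\mapsto\cdots\mapsto i_k\mapsto i_1$ (these are exactly the permutations $\sigma$ with $|\sigma|+|\sigma^{-1}\gamma|=p-1$, where $|\sigma|$ is the minimal number of transpositions needed to write $\sigma$). For a permutation, $\#$ counts cycles; for a partition, $\#$ counts blocks. *)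

(* Points {1,...,p} are represented by 'I_p = {0,...,p-1}
   (i <-> i+1). *)
From mathcomp Require Import all_boot all_order all_fingroup.
Set Implicit Arguments. Unset Strict Implicit. Unset Printing Implicit Defensive.

Definition gamma_cycle (p : nat) : {perm 'I_p} := perm (@ordS_inj p).

Definition noncrossing (p : nat) (P : {set {set 'I_p}}) : Prop :=
  forall (B1 B2 : {set 'I_p}) (a b c d : 'I_p),
    B1 \in P -> B2 \in P ->
    (a < b)%N -> (b < c)%N -> (c < d)%N ->
    a \in B1 -> c \in B1 -> b \in B2 -> d \in B2 -> B1 = B2.

Definition is_NC (p : nat) (P : {set {set 'I_p}}) : Prop :=
  partition P [set: 'I_p] /\ noncrossing P.

(* the least element of a set of ordinals (default x0 if empty) *)
Definition set_min (p : nat) (S : {set 'I_p}) (x0 : 'I_p) : 'I_p :=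
  odflt x0 [pick j in S | [forall k in S, (j <= k)%N]].

(* the geodesic permutation of P: each block {i1<...<ik} becomes the cycle
   i1 -> i2 -> ... -> ik -> i1, i.e. i is sent to the next larger element of
   its block, or to the smallest element of its block if i is the largest. *)
Definition nc_next (p : nat) (P : {set {set 'I_p}}) (i : 'I_p) : 'I_p :=
  let B := pblock P i in
  let S := [set j in B | (i < j)%N] in
  if S == set0 then set_min B i else set_min S i.

Definition even_blocks (p : nat) (P : {set {set 'I_p}}) : nat :=
  #|[set B in P | ~~ odd #|B|]|.

Definition ncycles (T : finType) (s : {perm T}) : nat := #|porbits s|.

From mathcomp Require Import all_boot all_order all_fingroup.
From mathcomp Require Import zify.
Set Implicit Arguments. Unset Strict Implicit. Unset Printing Implicit Defensive.

(* The statement is generalised to partial noncrossing partitions Q, whose blocks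
   cover a subset S of 'I_p, gamma being replaced by the cycle of S. For the
   permutation "cycle of S, then nc_next Q" we prove (cycle_count_identity)
       #cycles + #|S| = p + [S != set0] + e(Q)
   by induction on #|S|. If Q has a singleton block {x}, x is deleted; otherwise
   noncrossing yields an arc x -> y of a block whose ends are also consecutive in
   S (exists_common_arc), and x and y are deleted. Deleting points from the
   cycles of two permutations changes the cycle count of their product in a
   controlled way (porbits_delete_fixed, porbits_delete_pair, both built on
   porbits_cut, i.e. multiplication by a transposition), and deleting points
   from Q changes e(Q) in a controlled way (even_blocks_delete_point). *)

(* Deleting x from the cycles of a function h: x becomes a fixed point and its
   predecessor is sent to h x. For a permutation h this is h * tperm x (h x). *)
Definition skip (T : eqType) (x : T) (h : T -> T) (z : T) : T :=
  if z == x then x else if h z == x then h x else h z.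

(* Deleting the arc x -> y (where h x = y) from the cycles of h, away from x, y. *)
Definition skip2 (T : eqType) (x y : T) (h : T -> T) (z : T) : T :=
  if h z == x then h y else h z.

Section Skip.

Variables (T : eqType) (x y : T) (h : T -> T).

Lemma skip_id : skip x h x = x.
Proof. by rewrite /skip eqxx. Qed.

Lemma skip_skip_x : x != y -> skip y (skip x h) x = x.
Proof. by move=> xy; rewrite /skip (negbTE xy) eqxx /= (negbTE xy). Qed.

Lemma skip_neq z : z != x -> skip x h z = if h z == x then h x else h z.
Proof. by rewrite /skip => /negbTE ->. Qed.

Lemma eq_skip (h' : T -> T) z : h x = h' x -> h z = h' z -> skip x h z = skip x h' z.
Proof. by rewrite /skip => -> ->. Qed.

Lemma skip_ext (h' : T -> T) : h =1 h' -> skip x h =1 skip x h'.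
Proof. by move=> e z; apply: eq_skip. Qed.

Lemma skip_fixed z : h x = x -> z != x -> skip x h z = h z.
Proof. by move=> hx zx; rewrite skip_neq //; case: eqP => [->|]. Qed.

Hypothesis hI : injective h.

Lemma skip_neq_x z : z != x -> skip x h z != x.
Proof.
move=> zx; rewrite skip_neq //; have [hz|//] := eqVneq (h z) x.
by apply: contraNneq zx => hx; apply/eqP/hI; rewrite hz hx.
Qed.

Lemma skip2_neq z : x != y -> h x = y -> z != x -> z != y ->
  skip2 x y h z != x /\ skip2 x y h z != y.
Proof.
move=> xy hx zx zy; rewrite /skip2; have [hz|hz] := eqVneq (h z) x; split => //.
- by apply: contraNneq zy => hy; apply/eqP/hI; rewrite hz hy.
- by apply: contraNneq xy => hy; apply/eqP/hI; rewrite hx hy.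
- by apply: contraNneq zx => hzy; apply/eqP/hI; rewrite hzy hx.
Qed.

Lemma skip_skip z : x != y -> h x = y -> z != x -> z != y ->
  skip y (skip x h) z = skip2 x y h z.
Proof.
move=> xy hx zx zy; rewrite /skip /skip2 (negbTE zx) (negbTE zy) [y == x]eq_sym (negbTE xy).
have [hz|hz] := eqVneq (h z) x.
  rewrite hx eqxx; case: eqP => // hy.
  by move/eqP: zy; case; apply: hI; rewrite hz hy.
by case: eqP => // hzy; move/eqP: zx; case; apply: hI; rewrite hzy hx.
Qed.

End Skip.

Definition block_next p (B : {set 'I_p}) (i : 'I_p) : 'I_p :=
  let S := [set j in B | (i < j)%N] in
  if S == set0 then set_min B i else set_min S i.

Lemma nc_nextE p (P : {set {set 'I_p}}) i : nc_next P i = block_next (pblock P i) i.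
Proof. by []. Qed.

Lemma set_minP p (S : {set 'I_p}) x0 : S != set0 ->
  set_min S x0 \in S /\ forall k, k \in S -> (set_min S x0 <= k)%N.
Proof.
case/set0Pn => a aS; rewrite /set_min; case: pickP => [j /andP[jS /forall_inP jmin]|none] /=.
  by split => // k kS; apply: jmin.
have [j jS jmin] := arg_minnP (fun j : 'I_p => nat_of_ord j) aS.
have jS' : j \in S := jS.
by move: (none j); rewrite jS' /=; move/negbT/negP; case; apply/forall_inP.
Qed.

Definition successor_in p (B : {set 'I_p}) (i v : 'I_p) : Prop :=
  v \in B /\
  (((i < v)%N /\ forall u, u \in B -> (i < u)%N -> (v <= u)%N) \/
   ((forall u, u \in B -> (u <= i)%N) /\ forall u, u \in B -> (v <= u)%N)).

Lemma block_nextP p (B : {set 'I_p}) i : i \in B -> successor_in B i (block_next B i).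
Proof.
move=> iB; rewrite /block_next /=; case: ifP => [/eqP above0|/negbT above].
  have [mB mmin] := set_minP i (introT (set0Pn B) (ex_intro _ i iB)).
  split => //; right; split => // u uB; rewrite leqNgt; apply/negP => iu.
  have : u \in [set j in B | (i < j)%N] by rewrite inE uB iu.
  by rewrite above0 inE.
have [] := set_minP i above; rewrite inE => /andP[mB im] mmin.
by split => //; left; split => // u uB iu; apply: mmin; rewrite inE uB.
Qed.

Lemma successor_in_uniq p (B : {set 'I_p}) i v w :
  successor_in B i v -> successor_in B i w -> v = w.
Proof.
move=> [vB [[iv vm]|[vm1 vm2]]] [wB [[iw wm]|[wm1 wm2]]]; apply: ord_inj.
- by have := vm _ wB iw; have := wm _ vB iv; lia.
- by have := wm1 _ vB; lia.
- by have := vm1 _ wB; lia.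
- by have := vm2 _ wB; have := wm2 _ vB; lia.
Qed.

Lemma block_next_eq p (B : {set 'I_p}) i v :
  i \in B -> successor_in B i v -> block_next B i = v.
Proof. by move=> iB; apply: successor_in_uniq; apply: block_nextP. Qed.

Lemma block_next_in p (B : {set 'I_p}) i : i \in B -> block_next B i \in B.
Proof. by move=> /block_nextP []. Qed.

Lemma block_next_inj p (B : {set 'I_p}) : {in B &, injective (block_next B)}.
Proof.
move=> i j iB jB; have [vB [[iv vm]|[vm1 vm2]]] := block_nextP iB;
  have [wB [[jw wm]|[wm1 wm2]]] := block_nextP jB => E; apply: ord_inj.
- rewrite -E in jw wm; have h1 := vm _ jB; have h2 := wm _ iB.
  by case: (ltngtP i j) => // h; [have := h1 h| have := h2 h]; lia.
- by rewrite E in iv; have := wm2 _ iB; lia.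
- by rewrite -E in jw; have := vm2 _ jB; lia.
- by have := vm1 _ jB; have := wm1 _ iB; lia.
Qed.

Lemma block_next_fix p (B : {set 'I_p}) i u :
  i \in B -> block_next B i = i -> u \in B -> u = i.
Proof.
move=> iB fix_i uB; have [_ [[iv _]|[m1 m2]]] := block_nextP iB.
  by rewrite fix_i in iv; lia.
by rewrite fix_i in m2; apply: ord_inj; have := m1 _ uB; have := m2 _ uB; lia.
Qed.

Lemma block_next_fixedE p (B : {set 'I_p}) i :
  i \in B -> (block_next B i == i) = (B :\ i == set0).
Proof.
move=> iB; apply/eqP/eqP => [fix_i|B1].
  apply/setP => u; rewrite !inE; apply/negbTE/andP => -[ui uB].
  by move/eqP: ui; apply; apply: block_next_fix iB fix_i uB.
apply/eqP; apply: contraT => ne.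
have : block_next B i \in B :\ i by rewrite in_setD1 ne block_next_in.
by rewrite B1 inE.
Qed.

Lemma block_next_gt p (B : {set 'I_p}) i u :
  i \in B -> u \in B -> (i < u)%N -> (i < block_next B i)%N.
Proof.
by move=> iB uB iu; have [_ [[h _]|[h _]]] := block_nextP iB => //; have := h _ uB; lia.
Qed.

Lemma block_next_min p (B : {set 'I_p}) i u : i \in B -> (i < block_next B i)%N ->
  u \in B -> (i < u)%N -> (block_next B i <= u)%N.
Proof.
move=> iB lt uB iu; have [vB [[_ vmin]|[vmax _]]] := block_nextP iB.
  exact: vmin.
by have := vmax _ vB; lia.
Qed.

Lemma block_next_setD1 p (B : {set 'I_p}) x z : x \in B -> z \in B -> z != x ->
  block_next (B :\ x) z = skip x (block_next B) z.
Proof.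
move=> xB zB zx; rewrite skip_neq //; apply: block_next_eq; first by rewrite !inE zx.
have [vB hv] := block_nextP zB.
case: eqP => [vx|/eqP vx]; last first.
  split; first by rewrite !inE vx.
  case: hv => [[zv zm]|[zm1 zm2]]; first by left; split => // u /setD1P[_ /zm].
  by right; split => u /setD1P[_ uB]; [apply: zm1|apply: zm2].
have [wB hw] := block_nextP xB.
have wx : block_next B x != x.
  by apply/eqP => E; move/eqP: zx; apply; apply: (block_next_fix xB E zB).
split; first by rewrite !inE wx.
have neq_x u : u \in B :\ x -> u \in B /\ nat_of_ord u != nat_of_ord x.
  by case/setD1P.
rewrite vx in hv; case: hv => [[zlx zm]|[zm1 zm2]]; case: hw => [[xlw xm]|[xm1 xm2]].
- left; split; first lia.
  by move=> u /neq_x[uB ux] zu; apply: xm => //; have := zm _ uB zu; lia.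
- right; split; last by move=> u /neq_x[uB _]; apply: xm2.
  move=> u /neq_x[uB ux]; rewrite leqNgt; apply/negP => zu.
  by have := zm _ uB zu; have := xm1 _ uB; lia.
- right; split; first by move=> u /neq_x[uB _]; apply: zm1.
  by move=> u /neq_x[uB ux]; apply: xm => //; have := zm2 _ uB; lia.
- have /neq_x[_ zx'] : z \in B :\ x by rewrite !inE zx.
  by have := zm2 _ zB; have := xm1 _ zB; lia.
Qed.

Lemma block_next_setT p (i : 'I_p) : block_next [set: 'I_p] i = ordS i.
Proof.
apply: block_next_eq; rewrite ?inE //; split; rewrite ?inE //.
case: (ltnP i.+1 p) => h.
  have -> : nat_of_ord (ordS i) = i.+1 by rewrite /ordS /= modn_small.
  by left; split => // u _.
have -> : nat_of_ord (ordS i) = 0.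
  by rewrite /ordS /= (_ : i.+1 = p) ?modnn //; have := ltn_ord i; lia.
by right; split => // u _; have := ltn_ord u; lia.
Qed.

Lemma block_next_2cycle p (B : {set 'I_p}) x y : x \in B -> y \in B -> (x < y)%N ->
  block_next B x = y -> block_next B y = x -> forall u, u \in B -> u = x \/ u = y.
Proof.
move=> xB yB xy hx hy u uB.
have [_ [[_ mx]|[m1 _]]] := block_nextP xB; last by have := m1 _ yB; lia.
have [_ [[h _]|[my1 my2]]] := block_nextP yB; first by rewrite hy in h; lia.
rewrite hx in mx; rewrite hy in my2; have h1 := my1 _ uB; have h2 := my2 _ uB.
case: (ltngtP x u) => [xu|ux|xu]; last by left; apply: ord_inj.
- by right; apply: ord_inj; have := mx _ uB xu; lia.
- by lia.
Qed.

Lemma setD1D1_neq0 p (B : {set 'I_p}) x y : x \in B -> y \in B -> x != y ->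
  block_next B x = y -> ((B :\ x) :\ y != set0) = (block_next B y != x).
Proof.
move=> xB yB xy hx; apply/idP/idP.
  case/set0Pn => u; rewrite !in_setD1 => /and3P[uy ux uB]; apply/eqP => hy.
  case: (ltngtP x y) => h.
  - by case: (block_next_2cycle xB yB h hx hy uB) => E; [move/eqP: ux|move/eqP: uy].
  - by case: (block_next_2cycle yB xB h hy hx uB) => E; [move/eqP: uy|move/eqP: ux].
  - by move/eqP: xy; case; apply: ord_inj.
move=> ne; apply/set0Pn; exists (block_next B y); rewrite !in_setD1 ne (block_next_in yB) /= andbT.
by apply/eqP => E; move/eqP: xy; case; apply: block_next_fix yB E xB.
Qed.

Definition partial_nc p (Q : {set {set 'I_p}}) : Prop :=
  [/\ trivIset Q, set0 \notin Q & noncrossing Q].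

Lemma trivIset_eq T (Q : {set {set T}}) A C u : trivIset Q -> A \in Q -> C \in Q ->
  u \in A -> u \in C -> A = C.
Proof. by move=> tQ AQ CQ uA uC; rewrite -(def_pblock tQ AQ uA) (def_pblock tQ CQ uC). Qed.

Lemma trivIsetW T (R : {set {set T}}) :
  (forall A C u, A \in R -> C \in R -> u \in A -> u \in C -> A = C) -> trivIset R.
Proof.
move=> H; apply/trivIsetP => A C AR CR neq; rewrite -setI_eq0; apply/set0Pn => -[u].
by rewrite inE => /andP[uA uC]; move/eqP: neq; apply; apply: H uA uC.
Qed.

Lemma in_cover T (Q : {set {set T}}) B z : B \in Q -> z \in B -> z \in cover Q.
Proof. by move=> BQ zB; apply/bigcupP; exists B. Qed.

Lemma nc_next_out p (Q : {set {set 'I_p}}) z : z \notin cover Q -> nc_next Q z = z.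
Proof.
move=> zc; rewrite nc_nextE; have -> : pblock Q z = set0.
  by rewrite /pblock; case: pickP => [B /andP[BQ zB]|//]; case/negP: zc; apply: in_cover zB.
rewrite /block_next /set_min.
have -> : [set j in (set0 : {set 'I_p}) | (z < j)%N] == set0 by apply/eqP/setP => u; rewrite !inE.
by case: pickP => [j /andP[]|]; rewrite ?inE.
Qed.

Lemma nc_next_in p (Q : {set {set 'I_p}}) B z : trivIset Q -> B \in Q -> z \in B ->
  nc_next Q z = block_next B z.
Proof. by move=> tQ BQ zB; rewrite nc_nextE (def_pblock tQ BQ zB). Qed.

Lemma nc_next_block p (Q : {set {set 'I_p}}) B z : trivIset Q -> B \in Q -> z \in B ->
  nc_next Q z \in B.
Proof. by move=> tQ BQ zB; rewrite (nc_next_in tQ BQ zB) block_next_in. Qed.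

Lemma nc_next_cover p (Q : {set {set 'I_p}}) z : trivIset Q -> z \in cover Q ->
  nc_next Q z \in cover Q.
Proof. by move=> tQ /bigcupP[B BQ zB]; apply: in_cover BQ (nc_next_block tQ BQ zB). Qed.

Lemma nc_next_inj p (Q : {set {set 'I_p}}) : trivIset Q -> injective (nc_next Q).
Proof.
move=> tQ x y E.
case xc: (x \in cover Q); case yc: (y \in cover Q).
- case/bigcupP: xc => B BQ xB; case/bigcupP: yc => C CQ yC.
  have h := nc_next_block tQ BQ xB; rewrite E in h.
  have BC := trivIset_eq tQ CQ BQ (nc_next_block tQ CQ yC) h; subst C.
  by move: E; rewrite !(nc_next_in tQ BQ) //; apply: block_next_inj.
- by have := nc_next_cover tQ xc; rewrite E nc_next_out ?yc.
- by have := nc_next_cover tQ yc; rewrite -E nc_next_out ?xc.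
- by move: E; rewrite !nc_next_out ?xc ?yc.
Qed.

Definition geo_perm p (Q : {set {set 'I_p}}) (tQ : trivIset Q) : {perm 'I_p} :=
  perm (nc_next_inj tQ).

Definition cycle_perm p (S : {set 'I_p}) : {perm 'I_p} := geo_perm (trivIset1 S).

Lemma geo_permE p (Q : {set {set 'I_p}}) (tQ : trivIset Q) z : geo_perm tQ z = nc_next Q z.
Proof. exact: permE. Qed.

Lemma cycle_perm_in p (S : {set 'I_p}) z : z \in S -> cycle_perm S z = block_next S z.
Proof. by move=> zS; rewrite geo_permE (@nc_next_in _ _ S) ?inE //; apply: trivIset1. Qed.

Lemma cycle_perm_out p (S : {set 'I_p}) z : z \notin S -> cycle_perm S z = z.
Proof. by move=> zS; rewrite geo_permE nc_next_out ?cover1. Qed.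

Lemma cycle_perm_setD1 p (S : {set 'I_p}) x : x \in S ->
  cycle_perm (S :\ x) =1 skip x (cycle_perm S).
Proof.
move=> xS z; have [->|zx] := eqVneq z x; first by rewrite skip_id cycle_perm_out // !inE eqxx.
have [zS|zS] := boolP (z \in S); last first.
  by rewrite skip_neq // !(cycle_perm_out zS) (negbTE zx) cycle_perm_out // !inE (negbTE zS) andbF.
rewrite cycle_perm_in ?inE ?zx // block_next_setD1 //.
by apply: eq_skip; rewrite cycle_perm_in.
Qed.

Definition delete_point p (Q : {set {set 'I_p}}) (x : 'I_p) : {set {set 'I_p}} :=
  let B := pblock Q x in
  (Q :\ B) :|: (if B :\ x == set0 then set0 else [set B :\ x]).

Section DeletePoint.

Variables (p : nat) (Q : {set {set 'I_p}}) (x : 'I_p).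
Hypotheses (tQ : trivIset Q) (xQ : x \in cover Q).

Local Notation B := (pblock Q x).
Local Notation Q' := (delete_point Q x).

Let BQ : B \in Q := pblock_mem xQ.
Let xB : x \in B. Proof. by rewrite mem_pblock. Qed.

Lemma delete_pointP A : A \in Q' -> (A \in Q /\ A != B) \/ (A = B :\ x /\ B :\ x != set0).
Proof.
rewrite !inE; case/orP => [/andP[AB AQ]|]; first by left.
by case: ifP => [_|/negbT h]; rewrite ?inE // => /eqP ->; right.
Qed.

Lemma delete_point_other A : A \in Q -> A != B -> A \in Q'.
Proof. by move=> AQ AB; rewrite !inE AQ AB. Qed.

Lemma delete_point_block : B :\ x != set0 -> B :\ x \in Q'.
Proof. by move=> h; rewrite /delete_point (negbTE h) !inE eqxx orbT. Qed.

Lemma delete_point_trivIset : trivIset Q'.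
Proof.
apply: trivIsetW => A C u /delete_pointP hA /delete_pointP hC uA uC.
case: hA => [[AQ AB]|[EA _]]; case: hC => [[CQ CB]|[EC _]]; subst => //.
- exact: trivIset_eq tQ AQ CQ uA uC.
- by case/setD1P: uC => _ uB; move/eqP: AB; case; apply: trivIset_eq tQ AQ BQ uA uB.
- by case/setD1P: uA => _ uB; move/eqP: CB; case; apply: trivIset_eq tQ CQ BQ uC uB.
Qed.

Lemma delete_point_partial_nc : partial_nc Q -> partial_nc Q'.
Proof.
case=> _ nQ ncQ; split; first exact: delete_point_trivIset.
  by apply/negP => /delete_pointP [[h _]|[h1 h2]]; [rewrite h in nQ|rewrite -h1 eqxx in h2].
move=> B1 B2 a b c d /delete_pointP h1 /delete_pointP h2 ab bc cd aB1 cB1 bB2 dB2.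
have sub u : u \in B :\ x -> u \in B by case/setD1P.
case: h1 => [[Q1 N1]|[E1 _]]; case: h2 => [[Q2 N2]|[E2 _]].
- exact: ncQ ab bc cd aB1 cB1 bB2 dB2.
- rewrite E2 in bB2 dB2.
  by move/eqP: N1; case; apply: ncQ ab bc cd aB1 cB1 (sub _ bB2) (sub _ dB2).
- rewrite E1 in aB1 cB1.
  by move/eqP: N2; case; symmetry; apply: ncQ ab bc cd (sub _ aB1) (sub _ cB1) bB2 dB2.
- by rewrite E1 E2.
Qed.

Lemma cover_delete_point : cover Q' = cover Q :\ x.
Proof.
apply/setP => u; apply/bigcupP/idP.
- case=> A /delete_pointP [[AQ AB] uA|[-> _] /setD1P[ux uB]]; last first.
    by rewrite in_setD1 ux (in_cover BQ uB).
  rewrite in_setD1 (in_cover AQ uA) andbT; apply: contraNneq AB => ux.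
  by rewrite ux in uA; apply/eqP; apply: trivIset_eq tQ AQ BQ uA xB.
- rewrite in_setD1 => /andP[ux /bigcupP[A AQ uA]].
  have [AB|AB] := eqVneq A B; last by exists A => //; apply: delete_point_other.
  have uBx : u \in B :\ x by rewrite in_setD1 ux -AB.
  by exists (B :\ x) => //; apply: delete_point_block; apply/set0Pn; exists u.
Qed.

Lemma card_cover_delete_point : (#|cover Q'| < #|cover Q|)%N.
Proof. by rewrite cover_delete_point (cardsD1 x (cover Q)) xQ. Qed.

Lemma pblock_delete_point z : z \in B :\ x -> pblock Q' z = B :\ x.
Proof.
move=> zBx; have ne : B :\ x != set0 by apply/set0Pn; exists z.
exact: def_pblock delete_point_trivIset (delete_point_block ne) zBx.
Qed.

Lemma nc_next_delete_point : nc_next Q' =1 skip x (nc_next Q).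
Proof.
have tQ' := delete_point_trivIset.
move=> z; have [->|zx] := eqVneq z x.
  by rewrite skip_id nc_next_out // cover_delete_point !inE eqxx.
have [zQ|zQ] := boolP (z \in cover Q); last first.
  rewrite skip_neq // (nc_next_out zQ) (negbTE zx) nc_next_out //.
  by rewrite cover_delete_point !inE (negbTE zQ) andbF.
rewrite skip_neq //; case/bigcupP: zQ => C CQ zC.
have [CB|CB] := eqVneq C B.
  subst C; have zBx : z \in B :\ x by rewrite in_setD1 zx zC.
  rewrite nc_nextE pblock_delete_point // block_next_setD1 // skip_neq //.
  by rewrite !(nc_next_in tQ BQ).
rewrite (nc_next_in tQ' (delete_point_other CQ CB) zC) (nc_next_in tQ CQ zC).
case: eqP => // E; have := block_next_in zC; rewrite E => xC.
by move/eqP: CB; case; apply: trivIset_eq tQ CQ BQ xC xB.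
Qed.

Lemma geo_perm_delete_point (tQ' : trivIset Q') : geo_perm tQ' =1 skip x (geo_perm tQ).
Proof.
by move=> z; rewrite geo_permE nc_next_delete_point; apply: skip_ext => w; rewrite geo_permE.
Qed.

Lemma even_blocks_delete_point :
  even_blocks Q' + ~~ odd #|B| = even_blocks Q + ((B :\ x != set0) && ~~ odd #|B :\ x|).
Proof.
have split_B R : R \in Q -> even_blocks Q = (~~ odd #|R|) + #|[set C in Q :\ R | ~~ odd #|C|]|.
  move=> RQ; rewrite /even_blocks (cardsD1 R) inE RQ /=.
  by congr (_ + _); apply: eq_card => C; rewrite !inE; case: (C != R).
rewrite (split_B _ BQ).
set E := #|[set C in Q :\ B | _]|; set b := _ && _.
suff -> : even_blocks Q' = E + b by rewrite addnC addnA.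
rewrite /even_blocks /delete_point /b /E; case: ifP => [_|/negbT ne] /=.
  by rewrite setU0 addn0; apply: eq_card => C; rewrite !inE.
have nin : B :\ x \notin Q :\ B.
  apply/negP; rewrite in_setD1 => /andP[N BxQ].
  case/set0Pn: ne => u uBx; have uB : u \in B by case/setD1P: uBx.
  by move/eqP: N; apply; apply: trivIset_eq tQ BxQ BQ uBx uB.
rewrite (cardsD1 (B :\ x)) !inE eqxx orbT /= addnC; congr (_ + _).
apply: eq_card => C; rewrite !inE; case CE: (C == B :\ x) => //=; last by rewrite orbF.
by move/eqP: CE => ->; move: nin; rewrite in_setD1 => /negbTE ->.
Qed.

End DeletePoint.

Lemma porbits1 (T : finType) : #|porbits (1 : {perm T})%g| = #|T|.
Proof.
rewrite /porbits card_imset // => a b E.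
have /porbitP[i ->] : a \in porbit 1 b by rewrite -E porbit_id.
by rewrite expg1n perm1.
Qed.

(* Cutting a non-fixed point x out of its cycle of s (making it a fixed point
   and sending its predecessor w to s x) adds one cycle. *)
Lemma porbits_cut (T : finType) (s t : {perm T}) x w : s w = x -> t x = x -> t w = s x ->
  (forall z, z != x -> z != w -> t z = s z) ->
  #|porbits t| = #|porbits s| + (s x != x).
Proof.
move=> swx tx tw tz.
have -> : t = (tperm x w * s)%g.
  apply/permP => z; rewrite permM; case: tpermP => [->|->|/eqP zx /eqP zw] //.
  - by rewrite tx swx.
  - by apply: tz.
have := porbits_mul_tperm s x w.
have -> : x \in porbit s w by have := mem_porbit s 1 w; rewrite expg1 swx.
rewrite /= addn0 => ->; congr (_ + _).
have [xw|xw] := eqVneq x w; first by rewrite -{2}swx xw eqxx.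
suff -> : s x != x by [].
by apply: contraNneq xw => sx; apply/eqP/(@perm_inj _ s); rewrite sx swx.
Qed.

Lemma porbits_delete_fixed (T : finType) (g pi s' : {perm T}) x : pi x = x ->
  (forall z, s' z = skip x pi (skip x g z)) ->
  #|porbits s'| = #|porbits (g * pi)%g| + ((g * pi)%g x != x).
Proof.
move=> pix s'E.
have s'E' z : z != x -> s' z = pi (if g z == x then g x else g z).
  by move=> zx; rewrite s'E skip_fixed ?skip_neq_x //; [rewrite skip_neq|apply: perm_inj].
apply: (@porbits_cut _ _ _ _ (g^-1 x)%g).
- by rewrite permM permKV.
- by rewrite s'E !skip_id.
- have [E|ne] := eqVneq (g^-1 x)%g x.
    have gx : g x = x by rewrite -{1}E permKV.
    by rewrite E s'E !skip_id permM gx pix.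
  by rewrite s'E' // permKV eqxx permM.
- move=> z zx zm; rewrite s'E' // permM; case: eqP => // gz.
  by move/eqP: zm; case; rewrite -gz permK.
Qed.

Section DeletePair.

Variables (T : finType) (g pi s2 : {perm T}) (x y : T).
Hypotheses (xy : x != y) (gx : g x = y) (pix : pi x = y).
Hypothesis s2E : forall z, s2 z = skip y (skip x pi) (skip y (skip x g) z).

Local Notation s := (g * pi)%g.
Let sE z : s z = pi (g z). Proof. exact: permM. Qed.
Let gI := @perm_inj _ g.
Let pI := @perm_inj _ pi.

Let s2x : s2 x = x.
Proof. by rewrite s2E !skip_skip_x. Qed.
Let s2y : s2 y = y. Proof. by rewrite s2E !skip_id. Qed.

Let s2E' z : z != x -> z != y -> s2 z = skip2 x y pi (skip2 x y g z).
Proof.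
move=> zx zy; have [wx wy] := skip2_neq gI xy gx zx zy.
by rewrite s2E (skip_skip gI) // (skip_skip pI).
Qed.

Let xm := (g^-1 x)%g.
Let gxm : g xm = x. Proof. exact: permKV. Qed.
Let xmx : xm != x.
Proof. by apply: contraNneq xy => E; rewrite -gx -{2}E gxm. Qed.
Let gzx z : z != xm -> g z != x.
Proof. by move=> zm; apply: contraNneq zm => E; apply/eqP/gI; rewrite E gxm. Qed.

Lemma porbits_delete_2cycle : pi y = x -> #|porbits s2| = #|porbits s| + (s y != y).
Proof.
move=> piy; apply: (@porbits_cut _ s s2 y xm); rewrite ?sE ?gxm //.
- have pgy : pi (g y) != x.
    apply/eqP => E; have : g y = y by apply: pI; rewrite E piy.
    by move=> gyy; move/eqP: xy; apply; apply: gI; rewrite gx gyy.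
  have [E|ne] := eqVneq xm y; first by rewrite {1}E s2y -{2}E gxm pix.
  by rewrite s2E' // /skip2 gxm eqxx (negbTE pgy).
- move=> z zy zm; have [->|zx] := eqVneq z x; first by rewrite s2x sE gx piy.
  rewrite s2E' // /skip2 (negbTE (gzx zm)) sE; case: eqP => // E.
  by move/eqP: zx; case; apply: gI; rewrite gx; apply: pI; rewrite E piy.
Qed.

Let w := (pi^-1 x)%g.
Let piw : pi w = x. Proof. exact: permKV. Qed.
Let wm := (g^-1 w)%g.
Let gwm : g wm = w. Proof. exact: permKV. Qed.
Let wx : w != x.
Proof. by apply: contraNneq xy => E; rewrite -pix -{2}E piw. Qed.
Let pgz z : z != wm -> pi (g z) != x.
Proof.
by move=> zw; apply: contraNneq zw => E; apply/eqP/gI; rewrite gwm; apply: pI; rewrite E piw.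
Qed.

(* Generic case: cut x out of s, then y. *)
Lemma porbits_delete_pair_apart : pi y != x -> g y != w ->
  #|porbits s2| = #|porbits s| + (s x != x) + (s y != y).
Proof.
move=> piy gyw; have wy : w != y by apply: contraNneq piy => <-; rewrite piw.
set t := (tperm x wm * s)%g.
have tE z : t z = s (tperm x wm z) by rewrite /t permM.
have wmx : wm != x by apply: contraNneq wy => E; rewrite -gwm E gx.
have wmy : wm != y by apply: contraNneq gyw => <-; rewrite gwm.
have t_s : #|porbits t| = #|porbits s| + (s x != x).
  apply: (@porbits_cut _ s t x wm); rewrite ?tE ?tpermL ?tpermR ?sE ?gwm //.
  by move=> z zx zw; rewrite tE tpermD // eq_sym.
have ty : t y = s y by rewrite tE tpermD // eq_sym.
rewrite -ty -t_s; apply: (@porbits_cut _ t s2 y xm) => //.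
- have xmwm : xm != wm by apply: contraNneq wx => E; rewrite -gwm -E gxm.
  by rewrite tE tpermD 1?eq_sym ?xmx // sE gxm.
- rewrite ty; have [E|ne] := eqVneq xm y; first by rewrite {1}E s2y sE -{2}E gxm pix.
  rewrite s2E' // /skip2 gxm eqxx sE; case: eqP => // E.
  by move/eqP: gyw; case; apply: pI; rewrite E piw.
- move=> z zy zm; have [->|zx] := eqVneq z x; first by rewrite s2x tE tpermL sE gwm.
  have [->|zw] := eqVneq z wm.
    by rewrite s2E' // /skip2 gwm (negbTE wx) piw eqxx tE tpermR sE gx.
  by rewrite s2E' // /skip2 (negbTE (gzx zm)) (negbTE (pgz zw)) tE tpermD 1?eq_sym // sE.
Qed.

(* Case g y = w, i.e. x -> y -> w -> x along s: cut y first, then x. *)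
Lemma porbits_delete_pair_adjacent : g y = w ->
  #|porbits s2| = #|porbits s| + (s x != x) + (s y != y).
Proof.
move=> gyw; set t := (tperm y xm * s)%g.
have tE z : t z = s (tperm y xm z) by rewrite /t permM.
have xmy : xm != y by apply: contraNneq wx => E; rewrite -gyw -E gxm.
have t_s : #|porbits t| = #|porbits s| + (s y != y).
  apply: (@porbits_cut _ s t y xm); rewrite ?tE ?tpermL ?tpermR ?sE ?gxm //.
  by move=> z zy zm; rewrite tE tpermD // eq_sym.
have tx : t x = s x by rewrite tE tpermD // eq_sym.
rewrite addnAC -tx -t_s; apply: (@porbits_cut _ t s2 x xm) => //.
- by rewrite tE tpermR sE gyw.
- by rewrite tx s2E' // /skip2 gxm eqxx gyw piw eqxx sE gx.
- move=> z zx zm; have [->|zy] := eqVneq z y; first by rewrite s2y tE tpermL sE gxm.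
  have zw : z != wm by apply: contraNneq zy => E; apply/eqP/gI; rewrite E gwm gyw.
  by rewrite s2E' // /skip2 (negbTE (gzx zm)) (negbTE (pgz zw)) tE tpermD 1?eq_sym // sE.
Qed.

Lemma porbits_delete_pair :
  #|porbits s2| = #|porbits s| + (s x != x) + (s y != y).
Proof.
have [piy|piy] := eqVneq (pi y) x.
  by rewrite porbits_delete_2cycle // (sE x) gx piy eqxx addn0.
have [gyw|gyw] := eqVneq (g y) w.
  exact: porbits_delete_pair_adjacent.
exact: porbits_delete_pair_apart.
Qed.

End DeletePair.

(* An arc x < y is chosen with the fewest points of the cover strictly
   between x and y; a block in between would, by noncrossing, nest entirely
   inside and give a shorter arc. *)
Section CommonArc.

Variables (p : nat) (Q : {set {set 'I_p}}).
Hypotheses (tQ : trivIset Q) (ncQ : noncrossing Q) (big : forall B, B \in Q -> (1 < #|B|)%N).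

Local Notation S := (cover Q).
Local Notation next := (nc_next Q).

Definition arc_interior (x : 'I_p) : {set 'I_p} := [set u in S | (x < u < next x)%N].

(* The minimum of a block opens an ascending arc. *)
Lemma exists_ascending_arc : S != set0 -> exists x, (x \in S) && (x < next x)%N.
Proof.
case/set0Pn => a /bigcupP[B BQ aB].
have [m mB mmin] := arg_minnP (fun j : 'I_p => nat_of_ord j) aB.
have {}mB : m \in B := mB.
have : (1 < #|B|)%N := big BQ.
rewrite (cardsD1 m) mB ltnS lt0n cards_eq0 => /set0Pn[u /setD1P[um uB]].
have mu : (m < u)%N by rewrite ltn_neqAle mmin // andbT; apply: contra um => /eqP/val_inj ->.
exists m; rewrite (in_cover BQ mB) (nc_next_in tQ BQ mB) /=.
exact: block_next_gt mB uB mu.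
Qed.

(* A block meeting the interior of an arc lies inside it, and its least arc is
   a shorter ascending arc. *)
Lemma shorter_arc x u : x \in S -> (x < next x)%N -> u \in arc_interior x ->
  exists2 m, (m \in S) && (m < next m)%N & (#|arc_interior m| < #|arc_interior x|)%N.
Proof.
move=> xS lt; rewrite inE => /andP[uS /andP[xu unx]].
set B := pblock Q x; have BQ : B \in Q by apply: pblock_mem.
have xB : x \in B by rewrite mem_pblock.
have nxB : next x \in B by apply: nc_next_block.
set C := pblock Q u; have CQ : C \in Q by apply: pblock_mem.
have uC : u \in C by rewrite mem_pblock.
have CB : C != B.
  apply: contraTneq unx => E; rewrite -leqNgt (nc_next_in tQ BQ xB).
  by apply: block_next_min xB _ _ xu; rewrite -?(nc_next_in tQ BQ xB) // -E.
have inside c : c \in C -> (x < c < next x)%N.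
  move=> cC; have notB v : v \in B -> c != v.
    by move=> vB; apply: contraNneq CB => E; rewrite E in cC; apply/eqP/(trivIset_eq tQ CQ BQ cC).
  have cx := notB _ xB; have cn := notB _ nxB.
  case: (ltngtP c x) => [cl|cg|/val_inj E]; last by rewrite E eqxx in cx.
  - by move/eqP: CB; case; apply: ncQ cl xu unx cC uC xB nxB.
  case: (ltngtP c (next x)) => [//|cg2|/val_inj E]; last by rewrite E eqxx in cn.
  by move/eqP: CB; case; symmetry; apply: ncQ xu unx cg2 xB nxB uC cC.
have [m mC mmin] := arg_minnP (fun j : 'I_p => nat_of_ord j) uC.
have {}mC : m \in C := mC.
have : (1 < #|C|)%N := big CQ.
rewrite (cardsD1 m) mC ltnS lt0n cards_eq0 => /set0Pn[c /setD1P[cm cC]].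
have mc : (m < c)%N by rewrite ltn_neqAle mmin // andbT; apply: contra cm => /eqP/val_inj ->.
have ltm : (m < next m)%N by rewrite (nc_next_in tQ CQ mC); apply: block_next_gt cC mc.
exists m; first by rewrite (in_cover CQ mC) ltm.
have /andP[xm mnx] := inside _ mC.
have /andP[_ nmnx] := inside _ (nc_next_block tQ CQ mC).
rewrite (cardsD1 m (arc_interior x)) !inE (in_cover CQ mC) xm mnx add1n ltnS.
apply: subset_leq_card; apply/subsetP => v; rewrite !inE => /andP[vS /andP[mv vnm]].
rewrite vS (ltn_trans xm mv) (ltn_trans vnm nmnx) !andbT.
by apply: contraTneq mv => ->; rewrite ltnn.
Qed.

Lemma exists_common_arc : S != set0 ->
  exists x, [/\ x \in S, next x != x & block_next S x = next x].
Proof.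
move=> /exists_ascending_arc[x0 arc0].
have [x /andP[xS lt] xmin] :=
  @arg_minnP _ x0 (fun x => (x \in S) && (x < next x)%N) (fun x => #|arc_interior x|) arc0.
exists x; split => //; first by apply: contraTneq lt => ->; rewrite ltnn.
apply: block_next_eq => //; split; first exact: nc_next_cover.
left; split => // u uS xu; rewrite leqNgt; apply/negP => unx.
have uI : u \in arc_interior x by rewrite inE uS xu unx.
have [m arcm] := shorter_arc xS lt uI.
by rewrite ltnNge xmin.
Qed.

End CommonArc.

Definition cycle_count_identity p (Q : {set {set 'I_p}}) : Prop :=
  forall tQ : trivIset Q,
  #|porbits (cycle_perm (cover Q) * geo_perm tQ)%g| + #|cover Q| =
  p + (cover Q != set0) + even_blocks Q.

Lemma cycle_count_empty p (Q : {set {set 'I_p}}) :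
  partial_nc Q -> cover Q = set0 -> cycle_count_identity Q.
Proof.
case=> _ nQ _ S0 tQ; have notS z : z \notin cover Q by rewrite S0 inE.
have -> : (cycle_perm (cover Q) * geo_perm tQ)%g = 1%g.
  by apply/permP => z; rewrite permM perm1 geo_permE !(cycle_perm_out, nc_next_out).
suff -> : even_blocks Q = 0 by rewrite porbits1 card_ord S0 cards0 eqxx !addn0.
apply/eqP; rewrite cards_eq0; apply/eqP/setP => B; rewrite !inE.
apply/negbTE/andP => -[BQ _]; suff B0 : B = set0 by rewrite -B0 BQ in nQ.
by apply/setP => u; rewrite inE; apply/negbTE; apply: contraNN (notS u); apply: in_cover.
Qed.

Lemma cycle_count_singleton p (Q : {set {set 'I_p}}) x : [set x] \in Q ->
  cycle_count_identity (delete_point Q x) -> cycle_count_identity Q.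
Proof.
move=> xQ IH tQ; set S := cover Q; have xS : x \in S := in_cover xQ (set11 x).
have tQ' := delete_point_trivIset tQ xS.
have pbx : pblock Q x = [set x] := def_pblock tQ xQ (set11 x).
set g := cycle_perm S; set pi := geo_perm tQ.
have pix : pi x = x.
  by apply/set1P; rewrite geo_permE (nc_next_in tQ xQ (set11 x)) block_next_in ?set11.
have cnt : #|porbits (cycle_perm (cover (delete_point Q x)) * geo_perm tQ')%g| =
             #|porbits (g * pi)%g| + ((g * pi)%g x != x).
  apply: porbits_delete_fixed pix _ => z.
  rewrite permM (geo_perm_delete_point tQ xS tQ') (cover_delete_point tQ xS).
  by rewrite (cycle_perm_setD1 xS).
have moved : ((g * pi)%g x != x) = (S :\ x != set0).
  by rewrite permM -{2}pix (inj_eq perm_inj) cycle_perm_in // block_next_fixedE.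
have := even_blocks_delete_point tQ xS; rewrite pbx setDv eqxx cards1 /= !addn0 => ev.
have S0 : S != set0 by apply/set0Pn; exists x.
have := IH tQ'; rewrite cnt cover_delete_point // -/S ev moved (cardsD1 x S) xS S0.
by move: #|porbits _| #|S :\ x| => c s; case: (S :\ x != set0) => /=; lia.
Qed.

(* Arithmetic of removing an arc x -> y: m counts the other points of the block
   of x, s the other points of the cover, c the cycles, e, e1, e2 the even blocks
   before and after each deletion. *)
Lemma arc_removal_arith (c s p m e e1 e2 : nat) :
  e1 + ~~ odd m = e + odd m ->
  e2 + odd m = e1 + (m != 0) && ~~ odd m ->
  c + (m != 0) + (s != 0) + s = p + (s != 0) + e2 ->
  c + s.+2 = p + 1 + e.
Proof. by case: m => [|m] /=; [|case: (odd m)]; lia. Qed.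

Lemma cycle_count_arc p (Q : {set {set 'I_p}}) x :
  x \in cover Q -> nc_next Q x != x -> block_next (cover Q) x = nc_next Q x ->
  cycle_count_identity (delete_point (delete_point Q x) (nc_next Q x)) ->
  cycle_count_identity Q.
Proof.
move=> xS yx gx IH tQ; set y := nc_next Q x in yx gx IH; rewrite eq_sym in yx.
set S := cover Q; set B := pblock Q x; set Q1 := delete_point Q x.
have BQ : B \in Q := pblock_mem xS; have xB : x \in B by rewrite mem_pblock.
have yB : y \in B := nc_next_block tQ BQ xB.
have yBx : y \in B :\ x by rewrite in_setD1 eq_sym yx.
have ySx : y \in S :\ x by rewrite in_setD1 eq_sym yx (in_cover BQ yB).
have tQ1 := delete_point_trivIset tQ xS.
have yS1 : y \in cover Q1 by rewrite cover_delete_point.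
have tQ2 := delete_point_trivIset tQ1 yS1.
set g := cycle_perm S; set pi := geo_perm tQ.
have cnt : #|porbits (cycle_perm (cover (delete_point Q1 y)) * geo_perm tQ2)%g| =
    #|porbits (g * pi)%g| + ((g * pi)%g x != x) + ((g * pi)%g y != y).
  apply: porbits_delete_pair yx _ _ _ => [||z]; first by rewrite /g cycle_perm_in.
    by rewrite /pi geo_permE.
  rewrite permM (geo_perm_delete_point tQ1 yS1 tQ2) (skip_ext y (geo_perm_delete_point tQ xS tQ1)).
  rewrite (cover_delete_point tQ1 yS1) (cover_delete_point tQ xS) -/S.
  by rewrite (cycle_perm_setD1 ySx) (skip_ext y (cycle_perm_setD1 xS)).
have movedx : ((g * pi)%g x != x) = ((B :\ x) :\ y != set0).
  rewrite permM /g cycle_perm_in // gx /pi geo_permE (nc_next_in tQ BQ yB).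
  by rewrite (setD1D1_neq0 xB yB yx) // -(nc_next_in tQ BQ xB).
have yS : y \in S := in_cover BQ yB.
have movedy : ((g * pi)%g y != y) = ((S :\ x) :\ y != set0).
  have pix : pi x = y by rewrite /pi geo_permE.
  rewrite permM -{2}pix (inj_eq perm_inj) /g cycle_perm_in //.
  by rewrite (setD1D1_neq0 xS yS yx gx).
have ev1 := even_blocks_delete_point tQ xS.
have ev2 := even_blocks_delete_point tQ1 yS1; rewrite (pblock_delete_point tQ xS yBx) in ev2.
have := IH tQ2; rewrite cnt movedx movedy.
rewrite (cover_delete_point tQ1 yS1) (cover_delete_point tQ xS) -/S.
have cS : #|S| = (#|(S :\ x) :\ y|).+2 by rewrite (cardsD1 x S) xS (cardsD1 y (S :\ x)) ySx.
have cB : #|B| = (#|(B :\ x) :\ y|).+2 by rewrite (cardsD1 x B) xB (cardsD1 y (B :\ x)) yBx.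
have cB1 : #|B :\ x| = (#|(B :\ x) :\ y|).+1 by rewrite (cardsD1 y (B :\ x)) yBx.
have S0 : S != set0 by apply/set0Pn; exists x.
have Bx0 : B :\ x != set0 by apply/set0Pn; exists y.
move: ev1 ev2; rewrite -/B -/Q1 cS S0 Bx0 cB cB1 -!cards_eq0 /= !negbK.
move: #|porbits _| #|S :\ x :\ y| #|B :\ x :\ y| (even_blocks Q) (even_blocks Q1) => c s m e e1.
exact: arc_removal_arith.
Qed.

Lemma cycle_count p (Q : {set {set 'I_p}}) : partial_nc Q -> cycle_count_identity Q.
Proof.
move: {2}#|cover Q| (leqnn #|cover Q|) => n; elim: n Q => [|n IH] Q sizeQ ncQ.
  by apply: cycle_count_empty => //; apply/eqP; rewrite -cards_eq0 -leqn0.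
have [S0|S0] := eqVneq (cover Q) set0; first exact: cycle_count_empty.
have {}IH (Q' : {set {set 'I_p}}) :
    partial_nc Q' -> (#|cover Q'| < #|cover Q|)%N -> cycle_count_identity Q'.
  by move=> ncQ' lt; apply: IH ncQ'; rewrite -ltnS (leq_trans lt sizeQ).
case: (ncQ) => tQ nQ ncrQ.
case: (boolP [exists B in Q, #|B| == 1]) => [/exists_inP[B BQ /cards1P[x Bx]]|/exists_inPn noS].
  subst B; have xS := in_cover BQ (set11 x).
  apply: cycle_count_singleton BQ _; apply: IH; first exact: delete_point_partial_nc.
  exact: card_cover_delete_point.
have big B : B \in Q -> (1 < #|B|)%N.
  by move=> BQ; rewrite ltn_neqAle eq_sym noS // card_gt0; apply: contraNneq nQ => <-.
have [x [xS yx gx]] := exists_common_arc tQ ncrQ big S0.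
have ncQ1 := delete_point_partial_nc tQ xS ncQ.
have tQ1 : trivIset (delete_point Q x) by case: ncQ1.
have yS1 : nc_next Q x \in cover (delete_point Q x).
  by rewrite cover_delete_point // in_setD1 yx nc_next_cover.
apply: (cycle_count_arc xS yx gx); apply: IH; first exact: delete_point_partial_nc ncQ1.
exact: ltn_trans (card_cover_delete_point tQ1 yS1) (card_cover_delete_point tQ xS).
Qed.

(* pi * gamma in the paper means "first gamma, then pi" (pi o gamma);
   in MathComp (s * t) x = t (s x), so pi o gamma is (gamma * s). *)
Theorem lemma1p1 (p : nat) (hp : (0 < p)%N) (P : {set {set 'I_p}}) :
  is_NC P ->
  exists s : {perm 'I_p},
    (forall i, s i = nc_next P i) /\
    (1 + even_blocks P)%N = ncycles (gamma_cycle p * s)%g.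
Proof.
case=> partP ncP; have tP := partition_trivIset partP.
have coverP : cover P = [set: 'I_p] := cover_partition partP.
exists (geo_perm tP); split; first exact: geo_permE.
have gammaE : cycle_perm (cover P) = gamma_cycle p.
  by apply/permP => i; rewrite coverP cycle_perm_in ?inE // block_next_setT permE.
have nonempty : cover P != set0 by rewrite coverP; apply/set0Pn; exists (Ordinal hp).
have := cycle_count (And3 tP (negbT (partition0 partP)) ncP) tP.
rewrite gammaE nonempty coverP cardsT card_ord addnC -addnA => /addnI.
by rewrite /ncycles => ->.
Qed.
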